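(* The function $$\varphi(x)=\frac12\log(1-x)+\frac{2xK(x)\big(E(x)-K(x)\big)}{2E(x)^2-2E(x)K(x)+x(1-x)K(x)^2}$$ is strictly decreasing from $(0,1)$ onto $(\log 4,\,8/5)$. In particular, for all $x\in(0,1)$, $$\frac{2xK(x)\big(K(x)-E(x)\big)}{8/5-\frac12\log(1-x)}\le 2E(x)K(x)-2E(x)^2-x(1-x)K(x)^2\le \frac{2xK(x)\big(K(x)-E(x)\big)}{\log4-\frac12\log(1-x)}.$$
   Context: $K(x)={\cal K}(\sqrt x)$ and $E(x)={\cal E}(\sqrt x)$ for $x\in[0,1)$, where ${\cal K}(r)=\int_0^{\pi/2}(1-r^2\sin^2t)^{-1/2}dt$ and ${\cal E}(r)=\int_0^{\pi/2}(1-r^2\sin^2t)^{1/2}dt$ are the complete elliptic integrals of the first and second kind. *)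

From Stdlib Require Import Reals.
From Coquelicot Require Import Coquelicot.
Open Scope R_scope.

Definition calK (r : R) : R :=
  RInt (fun t => / sqrt (1 - r ^ 2 * sin t ^ 2)) 0 (PI / 2).
Definition calE (r : R) : R :=
  RInt (fun t => sqrt (1 - r ^ 2 * sin t ^ 2)) 0 (PI / 2).

Definition Kx (x : R) : R := calK (sqrt x).
Definition Ex (x : R) : R := calE (sqrt x).

Definition phi (x : R) : R :=
  / 2 * ln (1 - x)
  + 2 * x * Kx x * (Ex x - Kx x)
    / (2 * Ex x ^ 2 - 2 * Ex x * Kx x + x * (1 - x) * Kx x ^ 2).

(* Write [m = x], [K = K(m)], [E = E(m)] and [r = E/K]. Differentiating under the integral
   sign gives [E' = (E - K)/(2m)] and [K' = (E - (1-m) K)/(2m(1-m))], so [r] solves a Riccati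
   equation. A barrier argument squeezes [r] between a polynomial in [sqrt (1 - m)] and
   [1 - m/2 - m^2/16]; these two barriers force the denominator of [phi] and the numerator of
   [phi' = K^4 Q(m, 1 - r) / (2 D^2)] to be negative, so [phi] decreases. Near [m = 0] the
   upper barrier gives [phi -> 8/5]; near [m = 1] one has [E -> 1] and
   [K = -ln(1-m)/2 + 2 ln 2 + o(1)], giving [phi -> ln 4]. The range then follows from the
   intermediate value theorem, and the two inequalities are [ln 4 < phi < 8/5] rearranged. *)

From Stdlib Require Import Reals Lra Psatz List.
Import ListNotations.
From Coquelicot Require Import Coquelicot.
Open Scope R_scope.

(* Goals produced by [RInt_ext] are equalities in a Coquelicot structure carrier that is
   convertible to, but not syntactically, [R]; [ring] and [field] do not recognise them. *)
Ltac real_eq := match goal with |- ?a = ?b => change (@eq R a b) end.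

Lemma RInt_lincomb (f g : R -> R) (c d a b : R) :
  ex_RInt f a b -> ex_RInt g a b ->
  RInt (fun t => c * f t + d * g t) a b = c * RInt f a b + d * RInt g a b.
Proof.
  intros Hf Hg; apply is_RInt_unique.
  apply (is_RInt_plus (V := R_NormedModule) (fun t => c * f t) (fun t => d * g t));
    apply (is_RInt_scal (V := R_NormedModule));
    now apply (RInt_correct (V := R_CompleteNormedModule)).
Qed.

Lemma RInt_lincomb3 (f g h : R -> R) (c d e a b : R) :
  ex_RInt f a b -> ex_RInt g a b -> ex_RInt h a b ->
  RInt (fun t => c * f t + d * g t + e * h t) a b
  = c * RInt f a b + d * RInt g a b + e * RInt h a b.
Proof.
  intros Hf Hg Hh; apply is_RInt_unique.
  apply (is_RInt_plus (V := R_NormedModule) (fun t => c * f t + d * g t) (fun t => e * h t)).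
  - apply (is_RInt_plus (V := R_NormedModule) (fun t => c * f t) (fun t => d * g t));
      apply (is_RInt_scal (V := R_NormedModule));
      now apply (RInt_correct (V := R_CompleteNormedModule)).
  - apply (is_RInt_scal (V := R_NormedModule));
      now apply (RInt_correct (V := R_CompleteNormedModule)).
Qed.

Lemma is_RInt_antiderivative (F f : R -> R) a b : a <= b ->
  (forall t, a <= t <= b -> is_derive F t (f t)) ->
  (forall t, a <= t <= b -> continuous f t) ->
  is_RInt f a b (F b - F a).
Proof.
  intros Hab HF Hf.
  apply (is_RInt_derive (V := R_CompleteNormedModule));
    intros t Ht; rewrite Rmin_left, Rmax_right in Ht by lra; auto.
Qed.

Lemma exists_left_lt_of_derive_pos (w : R -> R) m l a :
  is_derive w m l -> 0 < l -> a < m -> exists z, a < z < m /\ w z < w m.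
Proof.
  intros Hd Hl Ham; apply is_derive_Reals in Hd.
  destruct (Hd (l / 2) ltac:(lra)) as [[d Hd0] Hdd]; simpl in Hdd.
  set (h := - Rmin (d / 2) ((m - a) / 2)).
  assert (Hh : - d / 2 <= h < 0 /\ - (m - a) / 2 <= h).
  { pose proof (Rmin_l (d / 2) ((m - a) / 2)); pose proof (Rmin_r (d / 2) ((m - a) / 2)).
    pose proof (Rmin_pos (d / 2) ((m - a) / 2) ltac:(lra) ltac:(lra)); unfold h; lra. }
  specialize (Hdd h ltac:(lra)).
  assert (Habs : Rabs h < d) by (rewrite Rabs_left; lra).
  specialize (Hdd Habs); apply Rabs_lt_between in Hdd.
  exists (m + h); split; [lra |].
  assert (Hq : 0 < (w (m + h) - w m) / h) by lra.
  apply Ropp_lt_cancel, Rminus_lt; apply Rmult_lt_reg_r with (- / h).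
  { apply Ropp_0_gt_lt_contravar, Rinv_lt_0_compat; lra. }
  unfold Rdiv in Hq; lra.
Qed.

Definition converges_at_0 (f : R -> R) (l : R) :=
  forall eps, 0 < eps -> exists d, 0 < d /\ forall x, 0 < x < d -> Rabs (f x - l) < eps.

Definition converges_at_1 (f : R -> R) (l : R) :=
  forall eps, 0 < eps -> exists d, 0 < d /\ forall x, 1 - d < x < 1 -> Rabs (f x - l) < eps.

Lemma pos_of_barrier (w w' : R -> R) :
  (forall x, 0 < x < 1 -> is_derive w x (w' x)) ->
  converges_at_0 w 0 ->
  (forall x, 0 < x < 1 -> w x <= 0 -> 0 < w' x) ->
  forall x, 0 < x < 1 -> 0 < w x.
Proof.
  intros Hd Hlim Hpos x0 Hx0.
  destruct (Rlt_or_le 0 (w x0)) as [Hok | Hle]; [exact Hok | exfalso].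
  destruct (exists_left_lt_of_derive_pos w x0 (w' x0) 0 (Hd x0 Hx0) (Hpos x0 Hx0 Hle)
              ltac:(lra)) as [x1 [Hx1 Hw1]].
  destruct (Hlim (- w x1) ltac:(lra)) as [d [Hd0 Hd1]].
  set (x2 := Rmin (d / 2) (x1 / 2)).
  assert (Hx2 : 0 < x2 <= d / 2 /\ x2 <= x1 / 2).
  { pose proof (Rmin_l (d / 2) (x1 / 2)); pose proof (Rmin_r (d / 2) (x1 / 2)).
    pose proof (Rmin_pos (d / 2) (x1 / 2) ltac:(lra) ltac:(lra)); unfold x2; lra. }
  specialize (Hd1 x2 ltac:(lra)); rewrite Rminus_0_r in Hd1; apply Rabs_lt_between in Hd1.
  (* [w] attains its minimum on [[x2, x1]] at an interior point [m], where [w' m > 0]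
     forces smaller values just to the left of [m]. *)
  destruct (continuity_ab_min w x2 x1 ltac:(lra)) as [m [Hmin Hm]].
  { intros c Hc; apply continuity_pt_filterlim, (ex_derive_continuous (V := R_NormedModule)).
    exists (w' c); apply Hd; lra. }
  assert (Hwm : w m <= w x1) by (apply Hmin; lra).
  assert (Hm2 : x2 < m) by (destruct (Rle_lt_or_eq_dec x2 m (proj1 Hm)); [| subst m]; lra).
  destruct (exists_left_lt_of_derive_pos w m (w' m) x2 (Hd m ltac:(lra))
              (Hpos m ltac:(lra) ltac:(lra)) Hm2) as [z [Hz Hwz]].
  specialize (Hmin z ltac:(lra)); lra.
Qed.

Lemma lt_of_decreasing_converges_at_0 (f : R -> R) l :
  (forall x y, 0 < x -> x < y -> y < 1 -> f y < f x) -> converges_at_0 f l ->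
  forall x, 0 < x < 1 -> f x < l.
Proof.
  intros Hdec Hlim x Hx.
  enough (f (x / 2) <= l) by (pose proof (Hdec (x / 2) x ltac:(lra) ltac:(lra) ltac:(lra)); lra).
  apply Rnot_lt_le; intros Hlt.
  destruct (Hlim (f (x / 2) - l) ltac:(lra)) as [d [Hd Hnear]].
  set (z := Rmin (d / 2) (x / 4)).
  assert (0 < z < d /\ z < x / 2).
  { pose proof (Rmin_l (d / 2) (x / 4)); pose proof (Rmin_r (d / 2) (x / 4)).
    pose proof (Rmin_pos (d / 2) (x / 4) ltac:(lra) ltac:(lra)); unfold z; lra. }
  specialize (Hnear z ltac:(lra)); apply Rabs_lt_between in Hnear.
  pose proof (Hdec z (x / 2) ltac:(lra) ltac:(lra) ltac:(lra)); lra.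
Qed.

Lemma gt_of_decreasing_converges_at_1 (f : R -> R) l :
  (forall x y, 0 < x -> x < y -> y < 1 -> f y < f x) -> converges_at_1 f l ->
  forall x, 0 < x < 1 -> l < f x.
Proof.
  intros Hdec Hlim x Hx.
  enough (l <= f ((1 + x) / 2))
    by (pose proof (Hdec x ((1 + x) / 2) ltac:(lra) ltac:(lra) ltac:(lra)); lra).
  apply Rnot_lt_le; intros Hlt.
  destruct (Hlim (l - f ((1 + x) / 2)) ltac:(lra)) as [d [Hd Hnear]].
  set (z := Rmax (1 - d / 2) ((3 + x) / 4)).
  assert (1 - d < z < 1 /\ (1 + x) / 2 < z).
  { unfold z; pose proof (Rmax_l (1 - d / 2) ((3 + x) / 4)).
    pose proof (Rmax_r (1 - d / 2) ((3 + x) / 4)).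
    assert (Rmax (1 - d / 2) ((3 + x) / 4) < 1) by (apply Rmax_lub_lt; lra); lra. }
  specialize (Hnear z ltac:(lra)); apply Rabs_lt_between in Hnear.
  pose proof (Hdec ((1 + x) / 2) z ltac:(lra) ltac:(lra) ltac:(lra)); lra.
Qed.

Lemma surjective_of_converges (f : R -> R) lo hi :
  (forall x, 0 < x < 1 -> continuity_pt f x) -> converges_at_0 f hi -> converges_at_1 f lo ->
  forall z, lo < z < hi -> exists x, 0 < x < 1 /\ f x = z.
Proof.
  intros Hcont Hhi Hlo z Hz.
  destruct (Hhi (hi - z) ltac:(lra)) as [d0 [Hd0 H0]].
  destruct (Hlo (z - lo) ltac:(lra)) as [d1 [Hd1 H1]].
  set (xa := Rmin (d0 / 2) (1 / 2)); set (xb := Rmax (1 - d1 / 2) (1 / 2)).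
  assert (Hxa : 0 < xa < d0 /\ xa <= 1 / 2).
  { pose proof (Rmin_l (d0 / 2) (1 / 2)); pose proof (Rmin_r (d0 / 2) (1 / 2)).
    pose proof (Rmin_pos (d0 / 2) (1 / 2) ltac:(lra) ltac:(lra)); unfold xa; lra. }
  assert (Hxb : 1 - d1 < xb < 1 /\ 1 / 2 <= xb).
  { unfold xb; pose proof (Rmax_l (1 - d1 / 2) (1 / 2)); pose proof (Rmax_r (1 - d1 / 2) (1 / 2)).
    assert (Rmax (1 - d1 / 2) (1 / 2) < 1) by (apply Rmax_lub_lt; lra); lra. }
  specialize (H0 xa ltac:(lra)); specialize (H1 xb ltac:(lra)).
  apply Rabs_lt_between in H0; apply Rabs_lt_between in H1.
  assert (Hab : xa < xb) by (destruct (Req_dec xa xb) as [Heq | ]; [rewrite Heq in H0 |]; lra).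
  destruct (Ranalysis5.IVT_interv (fun t => z - f t) xa xb) as [c [Hc Hfc]]; [| lra | lra | lra |].
  - intros t Ht; apply continuity_pt_minus; [apply continuity_pt_const; now intros ? ? | ].
    apply Hcont; lra.
  - exists c; split; lra.
Qed.

Lemma ln_le_sub_1 z : 0 < z -> ln z <= z - 1.
Proof.
  intros Hz; destruct (Req_dec (ln z) 0) as [H0 | H0].
  - rewrite H0; rewrite <- (exp_ln z Hz), H0, exp_0; lra.
  - pose proof (exp_ineq1 _ H0); rewrite exp_ln in * by exact Hz; lra.
Qed.

Lemma ln2_le_1 : ln 2 <= 1.
Proof. pose proof (ln_le_sub_1 2 ltac:(lra)); lra. Qed.

Lemma ln_one_sub_bounds m : 0 < m <= 1 / 2 -> - (2 * m) <= ln (1 - m) <= 0.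
Proof.
  intros Hm; split.
  - pose proof (ln_le_sub_1 (/ (1 - m)) ltac:(apply Rinv_0_lt_compat; lra)) as Hln.
    rewrite ln_Rinv in Hln by lra.
    assert (/ (1 - m) - 1 <= 2 * m).
    { apply Rmult_le_reg_r with (1 - m); [lra |].
      replace ((/ (1 - m) - 1) * (1 - m)) with m by (field; lra); nra. }
    lra.
  - pose proof (ln_le_sub_1 (1 - m) ltac:(lra)); lra.
Qed.

Lemma ln_sqrt y : 0 < y -> ln (sqrt y) = ln y / 2.
Proof.
  intros Hy; pose proof (sqrt_lt_R0 y Hy).
  rewrite <- (sqrt_sqrt y) at 2 by lra; rewrite ln_mult by lra; field.
Qed.

Lemma div_bounds_of_shifted_ratio l n a lo hi : 0 < a -> l < lo ->
  lo < l + n / a < hi -> n / (hi - l) <= a <= n / (lo - l).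
Proof.
  intros Ha Hl [Hlo Hhi].
  assert (Hn : n / a * a = n) by (field; lra).
  split.
  - apply Rmult_le_reg_r with (hi - l); [lra |].
    replace (n / (hi - l) * (hi - l)) with n by (field; lra); nra.
  - apply Rmult_le_reg_r with (lo - l); [lra |].
    replace (n / (lo - l) * (lo - l)) with n by (field; lra); nra.
Qed.

(** * Bernstein-type positivity certificates *)

(* [bernstein cs q = sum_i cs_i q^i (1 - q)^(n - i)] with [n + 1 = length cs]. *)
Fixpoint bernstein (cs : list R) (q : R) : R :=
  match cs with
  | nil => 0
  | c :: cs' => c * (1 - q) ^ length cs' + q * bernstein cs' q
  end.

Lemma bernstein_nonneg cs q :
  List.Forall (fun c => 0 < c) cs -> 0 < q < 1 -> 0 <= bernstein cs q.
Proof.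
  intros Hcs Hq; induction Hcs as [| c cs Hc _ IH]; simpl; [lra |].
  pose proof (pow_lt (1 - q) (length cs) ltac:(lra)); nra.
Qed.

Lemma bernstein_pos c cs q :
  List.Forall (fun c => 0 < c) (c :: cs) -> 0 < q < 1 -> 0 < bernstein (c :: cs) q.
Proof.
  intros Hcs Hq; inversion Hcs as [| ? ? Hc Hcs']; subst; simpl.
  pose proof (pow_lt (1 - q) (length cs) ltac:(lra)).
  pose proof (bernstein_nonneg cs q Hcs' Hq); nra.
Qed.

Lemma pow_mul_pow_pos q i j : 0 < q < 1 -> 0 < q ^ i * (1 - q) ^ j.
Proof. intros Hq; apply Rmult_lt_0_compat; apply pow_lt; lra. Qed.

Lemma pos_of_bernstein_certificate q i j c cs e :
  0 < q < 1 -> List.Forall (fun c => 0 < c) (c :: cs) ->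
  e = q ^ i * (1 - q) ^ j * bernstein (c :: cs) q -> 0 < e.
Proof.
  intros Hq Hcs ->; apply Rmult_lt_0_compat;
    [apply pow_mul_pow_pos | apply bernstein_pos]; assumption.
Qed.

(** * The elliptic integrals as functions of the parameter *)

Lemma PI2_pos : 0 < PI / 2.
Proof. pose proof PI_RGT_0; lra. Qed.

Lemma sin_sqr_bounds t : 0 <= sin t ^ 2 <= 1.
Proof.
  pose proof (sin2 t); pose proof (Rle_0_sqr (sin t)).
  pose proof (Rle_0_sqr (cos t)); unfold Rsqr in *; split; nra.
Qed.

Lemma radicand_pos m t : m < 1 -> 0 < 1 - m * sin t ^ 2.
Proof.
  intros Hm; pose proof (sin_sqr_bounds t).
  destruct (Rle_lt_dec 0 m); [nra |].
  assert (m * sin t ^ 2 <= 0) by nra; lra.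
Qed.

Lemma continuous_radicand m t : continuous (fun t => 1 - m * sin t ^ 2) t.
Proof. apply (ex_derive_continuous (V := R_NormedModule)); auto_derive; auto. Qed.

Lemma is_derive_radicand_comp (G G' : R -> R) t m :
  m < 1 -> (forall z, 0 < z -> is_derive G z (G' z)) ->
  is_derive (fun u => G (1 - u * sin t ^ 2)) m (- sin t ^ 2 * G' (1 - m * sin t ^ 2)).
Proof.
  intros Hm HG.
  replace (- sin t ^ 2 * G' (1 - m * sin t ^ 2))
    with ((0 - 1 * sin t ^ 2) * G' (1 - m * sin t ^ 2)) by ring.
  apply (is_derive_comp G (fun u => 1 - u * sin t ^ 2)).
  - apply HG, radicand_pos, Hm.
  - auto_derive; auto; ring.
Qed.

Lemma is_derive_RInt_radicand (G G' : R -> R) m :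
  m < 1 ->
  (forall z, 0 < z -> is_derive G z (G' z)) ->
  (forall z, 0 < z -> continuous G' z) ->
  is_derive (fun u => RInt (fun t => G (1 - u * sin t ^ 2)) 0 (PI / 2)) m
    (RInt (fun t => - sin t ^ 2 * G' (1 - m * sin t ^ 2)) 0 (PI / 2)).
Proof.
  intros Hm HG HG'.
  set (eps := mkposreal ((1 - m) / 2) ltac:(lra)).
  assert (Hnear : forall u, Rabs (u - m) < eps -> u < 1).
  { intros u Hu; simpl in Hu; apply Rabs_lt_between in Hu; lra. }
  rewrite (RInt_ext _ (fun t => Derive (fun u => G (1 - u * sin t ^ 2)) m)).
  2: { intros t _; symmetry; apply is_derive_unique, is_derive_radicand_comp; auto. }
  apply is_derive_RInt_param.
  - exists eps; intros u Hu t _; eexists.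
    apply is_derive_radicand_comp; auto.
  - intros t _.
    apply continuity_2d_pt_ext_loc with (fun u v => - sin v ^ 2 * G' (1 - u * sin v ^ 2)).
    + exists eps; intros u v Hu _; symmetry.
      apply is_derive_unique, is_derive_radicand_comp; auto.
    + assert (Hs : continuity_2d_pt (fun _ v => sin v ^ 2) m t).
      { apply continuity_1d_2d_pt_comp with (f := fun v => sin v ^ 2) (g := fun _ v => v).
        - apply continuity_pt_filterlim, (ex_derive_continuous (V := R_NormedModule)).
          auto_derive; auto.
        - apply continuity_2d_pt_id2. }
      apply continuity_2d_pt_mult; [now apply continuity_2d_pt_opp |].
      apply continuity_1d_2d_pt_comp with (f := G') (g := fun u v => 1 - u * sin v ^ 2).
      * apply continuity_pt_filterlim, HG', radicand_pos, Hm.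
      * apply continuity_2d_pt_minus; [apply continuity_2d_pt_const |].
        apply continuity_2d_pt_mult; [apply continuity_2d_pt_id1 | exact Hs].
  - exists eps; intros u Hu.
    apply (ex_RInt_continuous (V := R_CompleteNormedModule)); intros z _.
    apply continuous_comp with (f := fun t => 1 - u * sin t ^ 2); [apply continuous_radicand |].
    apply (ex_derive_continuous (V := R_NormedModule)); eexists.
    apply HG, radicand_pos; auto.
Qed.

Definition ellK (m : R) : R := RInt (fun t => / sqrt (1 - m * sin t ^ 2)) 0 (PI / 2).
Definition ellE (m : R) : R := RInt (fun t => sqrt (1 - m * sin t ^ 2)) 0 (PI / 2).

Lemma Kx_ellK x : 0 <= x -> Kx x = ellK x.
Proof. intros Hx; unfold Kx, calK, ellK; now rewrite pow2_sqrt. Qed.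

Lemma Ex_ellE x : 0 <= x -> Ex x = ellE x.
Proof. intros Hx; unfold Ex, calE, ellE; now rewrite pow2_sqrt. Qed.

Lemma ex_RInt_ellK m : m < 1 -> ex_RInt (fun t => / sqrt (1 - m * sin t ^ 2)) 0 (PI / 2).
Proof.
  intros Hm; apply (ex_RInt_continuous (V := R_CompleteNormedModule)); intros t _.
  apply continuous_Rinv_comp; [apply continuous_sqrt_comp, continuous_radicand |].
  apply Rgt_not_eq, sqrt_lt_R0, radicand_pos, Hm.
Qed.

Lemma ex_RInt_ellE m : m < 1 -> ex_RInt (fun t => sqrt (1 - m * sin t ^ 2)) 0 (PI / 2).
Proof.
  intros Hm; apply (ex_RInt_continuous (V := R_CompleteNormedModule)); intros t _.
  apply continuous_sqrt_comp, continuous_radicand.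
Qed.

Lemma is_derive_ellE m : 0 < m < 1 -> is_derive ellE m ((ellE m - ellK m) / (2 * m)).
Proof.
  intros Hm.
  pose proof (is_derive_RInt_radicand sqrt (fun z => / (2 * sqrt z)) m ltac:(lra)) as Hd.
  replace ((ellE m - ellK m) / (2 * m))
    with (RInt (fun t => - sin t ^ 2 * / (2 * sqrt (1 - m * sin t ^ 2))) 0 (PI / 2)).
  { apply Hd.
    - intros z Hz; auto_derive; [lra |]; field.
      apply Rgt_not_eq, sqrt_lt_R0, Hz.
    - intros z Hz; apply (ex_derive_continuous (V := R_NormedModule)); auto_derive.
      pose proof (sqrt_lt_R0 z Hz); repeat split; lra. }
  replace ((ellE m - ellK m) / (2 * m)) with (/ (2 * m) * ellE m + - / (2 * m) * ellK m)
    by (field; lra).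
  unfold ellE, ellK.
  rewrite <- (RInt_lincomb (fun t => sqrt (1 - m * sin t ^ 2))
                           (fun t => / sqrt (1 - m * sin t ^ 2)));
    [| apply ex_RInt_ellE; lra | apply ex_RInt_ellK; lra].
  apply RInt_ext; intros t _; real_eq.
  pose proof (radicand_pos m t ltac:(lra)) as Hpos.
  pose proof (sqrt_lt_R0 _ Hpos); pose proof (sqrt_sqrt _ (Rlt_le _ _ Hpos)) as Hsq.
  set (D := sqrt (1 - m * sin t ^ 2)) in *.
  replace (sin t ^ 2) with ((1 - D * D) / m) by (rewrite Hsq; field; lra).
  field; lra.
Qed.

(* The derivative of [sin t cos t / sqrt (1 - m sin^2 t)]; it integrates to zero over
   [0, PI/2], which is what turns the derivative of [K] into a combination of [E] and [K]. *)
Definition ellK_corrector m t :=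
  (1 - 2 * sin t ^ 2 + m * sin t ^ 4) / ((1 - m * sin t ^ 2) * sqrt (1 - m * sin t ^ 2)).

Lemma is_RInt_ellK_corrector m : m < 1 -> is_RInt (ellK_corrector m) 0 (PI / 2) 0.
Proof.
  intros Hm.
  set (h := fun t => sin t * cos t / sqrt (1 - m * sin t ^ 2)).
  assert (Hh : minus (h (PI / 2)) (h 0) = 0).
  { unfold h, minus, plus, opp; simpl; rewrite cos_PI2, sin_0; unfold Rdiv; ring. }
  rewrite <- Hh at 2.
  apply (is_RInt_derive (V := R_CompleteNormedModule)); intros t _;
    pose proof (radicand_pos m t Hm) as Hpos; pose proof (sqrt_lt_R0 _ Hpos).
  - pose proof (sqrt_sqrt _ (Rlt_le _ _ Hpos)) as Hsq.
    unfold h; auto_derive;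
      replace (1 + - (m * (sin t * (sin t * 1)))) with (1 - m * sin t ^ 2) by ring;
      [repeat split; lra |].
    unfold ellK_corrector; set (D := sqrt (1 - m * sin t ^ 2)) in *.
    rewrite <- Hsq; field_simplify_eq; [| lra].
    pose proof (sin2 t) as Hsc; unfold Rsqr in Hsc.
    replace (cos t ^ 2) with (1 - sin t ^ 2) by (simpl; lra).
    replace (D ^ 2) with (1 - m * sin t ^ 2) by (simpl; lra); ring.
  - unfold ellK_corrector; apply (ex_derive_continuous (V := R_NormedModule)).
    auto_derive;
      replace (1 + - (m * (sin t * (sin t * 1)))) with (1 - m * sin t ^ 2) by ring.
    repeat split; try lra; apply Rgt_not_eq, Rmult_lt_0_compat; lra.
Qed.

Lemma is_derive_ellK m :
  0 < m < 1 -> is_derive ellK m ((ellE m - (1 - m) * ellK m) / (2 * m * (1 - m))).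
Proof.
  intros Hm.
  pose proof (is_derive_RInt_radicand (fun z => / sqrt z) (fun z => - / (2 * z * sqrt z))
                m ltac:(lra)) as Hd.
  replace ((ellE m - (1 - m) * ellK m) / (2 * m * (1 - m)))
    with (RInt (fun t => - sin t ^ 2 * - / (2 * (1 - m * sin t ^ 2) * sqrt (1 - m * sin t ^ 2)))
            0 (PI / 2)).
  { apply Hd.
    - intros z Hz; pose proof (sqrt_lt_R0 z Hz); pose proof (sqrt_sqrt z (Rlt_le _ _ Hz)).
      auto_derive; [lra |].
      replace (sqrt z * sqrt z) with z; field; lra.
    - intros z Hz; apply (ex_derive_continuous (V := R_NormedModule)); auto_derive.
      pose proof (sqrt_lt_R0 z Hz); repeat split; try lra; apply Rgt_not_eq; nra. }
  replace ((ellE m - (1 - m) * ellK m) / (2 * m * (1 - m)))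
    with (/ (2 * m * (1 - m)) * ellE m + - / (2 * m) * ellK m
          + - / (2 * (1 - m)) * RInt (ellK_corrector m) 0 (PI / 2)).
  2: { rewrite (is_RInt_unique _ _ _ _ (is_RInt_ellK_corrector m ltac:(lra))); field; lra. }
  unfold ellE, ellK.
  rewrite <- (RInt_lincomb3 (fun t => sqrt (1 - m * sin t ^ 2))
                (fun t => / sqrt (1 - m * sin t ^ 2)) (ellK_corrector m));
    [| apply ex_RInt_ellE; lra | apply ex_RInt_ellK; lra
     | exists 0; apply is_RInt_ellK_corrector; lra].
  apply RInt_ext; intros t _; real_eq.
  pose proof (radicand_pos m t ltac:(lra)) as Hpos.
  pose proof (sqrt_lt_R0 _ Hpos); pose proof (sqrt_sqrt _ (Rlt_le _ _ Hpos)) as Hsq.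
  unfold ellK_corrector; set (D := sqrt (1 - m * sin t ^ 2)) in *.
  rewrite <- Hsq; field_simplify_eq; [| repeat split; lra].
  replace (D ^ 4) with ((1 - m * sin t ^ 2) ^ 2) by (rewrite <- Hsq; ring).
  replace (D ^ 2) with (1 - m * sin t ^ 2) by (rewrite <- Hsq; ring); ring.
Qed.

Lemma sqrt_radicand_le_1 m t : 0 <= m -> sqrt (1 - m * sin t ^ 2) <= 1.
Proof.
  intros Hm; rewrite <- sqrt_1 at 2; apply sqrt_le_1_alt.
  pose proof (sin_sqr_bounds t); nra.
Qed.

Lemma ellK_ge_PI2 m : 0 <= m < 1 -> PI / 2 <= ellK m.
Proof.
  intros Hm; replace (PI / 2) with (RInt (fun _ => 1) 0 (PI / 2))
    by (rewrite RInt_const; unfold scal; simpl; unfold mult; simpl; ring).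
  apply RInt_le; [pose proof PI2_pos; lra | apply ex_RInt_const | apply ex_RInt_ellK; lra |].
  intros t _; pose proof (sqrt_radicand_le_1 m t (proj1 Hm)).
  pose proof (sqrt_lt_R0 _ (radicand_pos m t (proj2 Hm))).
  rewrite <- Rinv_1 at 1; apply Rinv_le_contravar; lra.
Qed.

Lemma ellK_pos m : 0 <= m < 1 -> 0 < ellK m.
Proof. intros Hm; pose proof (ellK_ge_PI2 m Hm); pose proof PI_RGT_0; lra. Qed.

Lemma ellE_le_ellK m : 0 <= m < 1 -> ellE m <= ellK m.
Proof.
  intros Hm; apply RInt_le;
    [pose proof PI2_pos; lra | apply ex_RInt_ellE; lra | apply ex_RInt_ellK; lra |].
  intros t _; pose proof (sqrt_radicand_le_1 m t (proj1 Hm)).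
  pose proof (sqrt_lt_R0 _ (radicand_pos m t (proj2 Hm))).
  assert (1 <= / sqrt (1 - m * sin t ^ 2))
    by (rewrite <- Rinv_1 at 1; apply Rinv_le_contravar; lra).
  lra.
Qed.

Lemma ellE_ge m : 0 <= m < 1 -> (1 - m) * ellK m <= ellE m.
Proof.
  intros Hm; unfold ellK; rewrite <- (RInt_scal (V := R_CompleteNormedModule))
    by (apply ex_RInt_ellK; lra).
  apply RInt_le; [pose proof PI2_pos; lra | | apply ex_RInt_ellE; lra |].
  { apply (ex_RInt_scal (V := R_CompleteNormedModule)), ex_RInt_ellK; lra. }
  intros t _; pose proof (sin_sqr_bounds t).
  pose proof (radicand_pos m t (proj2 Hm)) as Hpos.
  pose proof (sqrt_lt_R0 _ Hpos); pose proof (sqrt_sqrt _ (Rlt_le _ _ Hpos)).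
  change (scal (1 - m) ?v) with ((1 - m) * v).
  set (D := sqrt (1 - m * sin t ^ 2)) in *.
  apply Rmult_le_reg_r with D; [lra |].
  rewrite Rmult_assoc, Rinv_l by lra; nra.
Qed.

(** * The Riccati equation for [E/K] and its polynomial barriers *)

Definition ratio m := ellE m / ellK m.

Definition riccati m r := - (r ^ 2 - 2 * (1 - m) * r + (1 - m)) / (2 * m * (1 - m)).

Lemma is_derive_ratio m : 0 < m < 1 ->
  is_derive ratio m (riccati m (ratio m)).
Proof.
  intros Hm; pose proof (ellK_pos m ltac:(lra)).
  pose proof (is_derive_div ellE ellK m _ _ (is_derive_ellE m Hm) (is_derive_ellK m Hm)
                ltac:(lra)) as Hd.
  match type of Hd with is_derive _ _ ?d => replace (riccati _ _) with d end; [exact Hd |].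
  unfold riccati, ratio; field; repeat split; lra.
Qed.

Lemma ratio_bounds m : 0 <= m < 1 -> 1 - m <= ratio m <= 1.
Proof.
  intros Hm; pose proof (ellK_pos m Hm); unfold ratio; split.
  - apply Rmult_le_reg_r with (ellK m); [lra |].
    unfold Rdiv; rewrite Rmult_assoc, Rinv_l by lra; pose proof (ellE_ge m Hm); lra.
  - apply Rmult_le_reg_r with (ellK m); [lra |].
    unfold Rdiv; rewrite Rmult_assoc, Rinv_l by lra; pose proof (ellE_le_ellK m Hm); lra.
Qed.

(* A polynomial in the complementary modulus [q = sqrt (1 - m)], with [low_poly 0 = 0] and
   [low_poly 1 = 1], fitted to lie just below [E/K]. *)
Definition low_poly q :=
  203/100 * q - 203/50 * q ^ 2 + 689/100 * q ^ 3 - 159/25 * q ^ 4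
  + 157/50 * q ^ 5 - 16/25 * q ^ 6.

Definition low_poly' q :=
  203/100 - 203/25 * q + 2067/100 * q ^ 2 - 636/25 * q ^ 3 + 157/10 * q ^ 4 - 96/25 * q ^ 5.

Definition up_poly m := 1 - m / 2 - m ^ 2 / 16.

(* [phi_den m = K^2 den_quad m (E/K)] and [phi' = K^4 num_quad m (1 - E/K) / (2 phi_den^2)],
   see [phi_den_eq] and [is_derive_phi_ell]. *)
Definition den_quad m r := 2 * r ^ 2 - 2 * r + m * (1 - m).

Definition num_quad m t := 2 * (2 - 3 * m) * t ^ 2 + 4 * m * t - m ^ 2 * (3 - m).

Lemma is_derive_low_poly q : is_derive low_poly q (low_poly' q).
Proof. unfold low_poly, low_poly'; auto_derive; auto; field. Qed.

Ltac bernstein_certificate i j c cs :=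
  intros Hq; eapply (pos_of_bernstein_certificate _ i j c cs);
    [exact Hq | repeat constructor; lra | unfold low_poly, low_poly'; simpl; field].

Lemma low_poly_subsolution q : 0 < q < 1 ->
  0 < (1 - q ^ 2) * q * low_poly' q - (low_poly q ^ 2 - 2 * q ^ 2 * low_poly q + q ^ 2).
Proof.
  bernstein_certificate 1%nat 3%nat (203/100)
    [90891/10000; 92123/5000; 218649/10000; 5751/250; 9057/400; 2923/200; 1747/400; 3/10].
Qed.

Lemma low_poly_gt_sqr q : 0 < q < 1 -> 0 < low_poly q - q ^ 2.
Proof. bernstein_certificate 1%nat 1%nat (203/100) [509/100; 139/20; 17/4; 1]. Qed.

Lemma low_poly_gt_id q : 0 < q < 1 -> 0 < low_poly q - q.
Proof. bernstein_certificate 1%nat 2%nat (103/100) [109/100; 19/20; 1/4]. Qed.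

Lemma low_poly_lt_1 q : 0 < q < 1 -> 0 < 1 - low_poly q.
Proof. bernstein_certificate 0%nat 1%nat 1 [397/100; 891/100; 181/20; 19/4; 1]. Qed.

Lemma low_poly_near_up_poly q : 0 < q < 1 ->
  0 < low_poly q - up_poly (1 - q ^ 2) + (1 - q) ^ 3 / 2.
Proof.
  unfold up_poly; bernstein_certificate 0%nat 3%nat (1/16) [181/200; 161/400; 1/5].
Qed.

Lemma den_quad_low_poly_neg q : 0 < q < 1 -> den_quad (1 - q ^ 2) (low_poly q) < 0.
Proof.
  intros Hq; apply Ropp_lt_cancel; rewrite Ropp_0; revert Hq; unfold den_quad.
  bernstein_certificate 1%nat 2%nat (203/50)
    [136491/5000; 241073/2500; 1043549/5000; 76007/250; 60493/200; 20277/100; 17519/200;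
     221/10; 5/2].
Qed.

Lemma num_quad_low_poly_neg q : 0 < q < 1 -> num_quad (1 - q ^ 2) (1 - low_poly q) < 0.
Proof.
  intros Hq; apply Ropp_lt_cancel; rewrite Ropp_0; revert Hq; unfold num_quad.
  bernstein_certificate 2%nat 4%nat (16209/5000)
    [13859/625; 308341/5000; 251927/2500; 465293/5000; 12779/250; 691/40; 459/100; 19/20].
Qed.

Lemma sqrt_one_sub_bounds m : 0 < m < 1 -> 0 < sqrt (1 - m) < 1 /\ sqrt (1 - m) ^ 2 = 1 - m.
Proof.
  intros Hm; split; [split |].
  - apply sqrt_lt_R0; lra.
  - rewrite <- sqrt_1 at 2; apply sqrt_lt_1_alt; lra.
  - apply pow2_sqrt; lra.
Qed.

Lemma is_derive_low_poly_sqrt m : 0 < m < 1 ->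
  is_derive (fun m => low_poly (sqrt (1 - m))) m
    (- / (2 * sqrt (1 - m)) * low_poly' (sqrt (1 - m))).
Proof.
  intros Hm; destruct (sqrt_one_sub_bounds m Hm) as [Hq _].
  apply (is_derive_comp low_poly (fun m => sqrt (1 - m))); [apply is_derive_low_poly |].
  auto_derive; [lra |]; replace (1 + - m) with (1 - m) by ring; field; lra.
Qed.

Lemma ratio_gt_low_poly m : 0 < m < 1 -> low_poly (sqrt (1 - m)) < ratio m.
Proof.
  intros Hm; apply Rlt_0_minus; revert m Hm.
  apply (pos_of_barrier _ (fun m => riccati m (ratio m)
                                   - - / (2 * sqrt (1 - m)) * low_poly' (sqrt (1 - m)))).
  - intros m Hm; apply (is_derive_minus (V := R_NormedModule)).
    + apply is_derive_ratio, Hm.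
    + apply is_derive_low_poly_sqrt, Hm.
  - intros eps Heps; exists (Rmin 1 (eps / 2)); split; [apply Rmin_pos; lra |].
    intros m Hm; pose proof (Rmin_l 1 (eps / 2)); pose proof (Rmin_r 1 (eps / 2)).
    destruct (sqrt_one_sub_bounds m ltac:(lra)) as [Hq Hq2].
    pose proof (ratio_bounds m ltac:(lra)).
    pose proof (low_poly_lt_1 _ Hq); pose proof (low_poly_gt_id _ Hq).
    assert (1 - sqrt (1 - m) <= m) by nra.
    rewrite Rminus_0_r; apply Rabs_lt_between; lra.
  - intros m Hm Hw.
    destruct (sqrt_one_sub_bounds m Hm) as [Hq Hq2].
    pose proof (ratio_bounds m ltac:(lra)).
    pose proof (low_poly_subsolution _ Hq); pose proof (low_poly_gt_sqr _ Hq).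
    set (q := sqrt (1 - m)) in *; set (F := low_poly q) in *; set (r := ratio m) in *.
    clearbody q F r; replace m with (1 - q ^ 2) in * by lra.
    replace (riccati (1 - q ^ 2) r - - / (2 * q) * low_poly' q)
      with (((2 * q ^ 2 - r - F) * (r - F)
             + ((1 - q ^ 2) * q * low_poly' q - (F ^ 2 - 2 * q ^ 2 * F + q ^ 2)))
            / (2 * (1 - q ^ 2) * (1 - (1 - q ^ 2))))
      by (unfold riccati; field; repeat split; lra).
    apply Rdiv_lt_0_compat; [| nra].
    assert (0 <= (2 * q ^ 2 - r - F) * (r - F)) by nra; lra.
Qed.

Lemma ratio_lt_up_poly m : 0 < m < 1 -> ratio m < up_poly m.
Proof.
  intros Hm; apply Rlt_0_minus; revert m Hm.
  apply (pos_of_barrier _ (fun m => (- / 2 - m / 8) - riccati m (ratio m))).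
  - intros m Hm; apply (is_derive_minus (V := R_NormedModule)).
    + unfold up_poly; auto_derive; auto; field.
    + apply is_derive_ratio, Hm.
  - intros eps Heps; exists (Rmin 1 (eps / 2)); split; [apply Rmin_pos; lra |].
    intros m Hm; pose proof (Rmin_l 1 (eps / 2)); pose proof (Rmin_r 1 (eps / 2)).
    pose proof (ratio_bounds m ltac:(lra)).
    unfold up_poly; rewrite Rminus_0_r; apply Rabs_lt_between; split; nra.
  - intros m Hm Hw; pose proof (ratio_bounds m ltac:(lra)).
    unfold up_poly in *; set (r := ratio m) in *; set (g := 1 - m / 2 - m ^ 2 / 16) in *.
    replace (- / 2 - m / 8 - riccati m r)
      with (((2 * (1 - m) - g - r) * (g - r) + (3 * m ^ 3 / 16 + m ^ 4 / 256))
            / (2 * m * (1 - m)))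
      by (unfold riccati, g; field; lra).
    apply Rdiv_lt_0_compat; [| nra].
    assert (1 - m <= g) by (unfold g; nra).
    assert (0 <= (2 * (1 - m) - g - r) * (g - r)) by nra.
    pose proof (pow_lt m 3 ltac:(lra)); pose proof (pow_lt m 4 ltac:(lra)); lra.
Qed.

(** * Monotonicity of [phi] *)

Lemma den_quad_ratio_neg m : 0 < m < 1 -> den_quad m (ratio m) < 0.
Proof.
  intros Hm; destruct (sqrt_one_sub_bounds m Hm) as [Hq Hq2].
  pose proof (ratio_gt_low_poly m Hm); pose proof (ratio_lt_up_poly m Hm).
  pose proof (den_quad_low_poly_neg _ Hq) as Hlow; rewrite Hq2 in Hlow.
  replace (1 - (1 - m)) with m in Hlow by ring.
  assert (Hup : den_quad m (up_poly m) < 0).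
  { unfold den_quad, up_poly.
    replace (2 * (1 - m / 2 - m ^ 2 / 16) ^ 2 - 2 * (1 - m / 2 - m ^ 2 / 16) + m * (1 - m))
      with (- m ^ 2 * (5 / 8 - m / 8 - m ^ 2 / 128)) by field.
    pose proof (pow_lt m 2 ltac:(lra)); pose proof (pow_lt m 3 ltac:(lra)); nra. }
  (* [den_quad m] is convex and negative at both barriers, which enclose [ratio m]. *)
  unfold den_quad in *; set (F := low_poly (sqrt (1 - m))) in *;
    set (g := up_poly m) in *; set (r := ratio m) in *.
  assert ((r - F) * (r - g) < 0).
  { replace ((r - F) * (r - g)) with (- ((r - F) * (g - r))) by ring.
    assert (0 < (r - F) * (g - r)) by (apply Rmult_lt_0_compat; lra); lra. }
  nra.
Qed.

Lemma num_quad_ratio_neg m : 0 < m < 1 -> num_quad m (1 - ratio m) < 0.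
Proof.
  intros Hm; destruct (sqrt_one_sub_bounds m Hm) as [Hq Hq2].
  pose proof (ratio_gt_low_poly m Hm); pose proof (ratio_bounds m ltac:(lra)).
  pose proof (num_quad_low_poly_neg _ Hq) as Hlow; rewrite Hq2 in Hlow.
  replace (1 - (1 - m)) with m in Hlow by ring.
  pose proof (low_poly_gt_sqr _ Hq); rewrite Hq2 in *.
  set (F := low_poly (sqrt (1 - m))) in *; set (r := ratio m) in *.
  (* [num_quad m] increases on the range of [1 - r] and [1 - F], and [1 - r < 1 - F]. *)
  replace (num_quad m (1 - r))
    with (num_quad m (1 - F) + (F - r) * (2 * (2 - 3 * m) * (2 - r - F) + 4 * m))
    by (unfold num_quad; ring).
  assert (0 < 2 * (2 - 3 * m) * (2 - r - F) + 4 * m).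
  { destruct (Rle_lt_dec 0 (2 - 3 * m)).
    - assert (0 <= 2 * (2 - 3 * m) * (2 - r - F)) by (apply Rmult_le_pos; lra); lra.
    - assert (2 * (2 - 3 * m) * (2 - r - F) >= 2 * (2 - 3 * m) * 2) by nra; lra. }
  nra.
Qed.

Definition phi_den m := 2 * ellE m ^ 2 - 2 * ellE m * ellK m + m * (1 - m) * ellK m ^ 2.

Definition phi_ell m := / 2 * ln (1 - m) + 2 * m * ellK m * (ellE m - ellK m) / phi_den m.

Lemma phi_eq_phi_ell x : 0 <= x -> phi x = phi_ell x.
Proof. intros Hx; unfold phi, phi_ell, phi_den; now rewrite Kx_ellK, Ex_ellE. Qed.

Lemma phi_den_eq m : 0 <= m < 1 -> phi_den m = ellK m ^ 2 * den_quad m (ratio m).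
Proof.
  intros Hm; pose proof (ellK_pos m Hm).
  unfold phi_den, den_quad, ratio; field; lra.
Qed.

Lemma phi_den_neg m : 0 < m < 1 -> phi_den m < 0.
Proof.
  intros Hm; rewrite phi_den_eq by lra.
  pose proof (den_quad_ratio_neg m Hm); pose proof (ellK_pos m ltac:(lra)).
  pose proof (pow_lt (ellK m) 2 ltac:(lra)); nra.
Qed.

Lemma is_derive_phi_ell m : 0 < m < 1 ->
  is_derive phi_ell m (ellK m ^ 4 * num_quad m (1 - ratio m) / (2 * phi_den m ^ 2)).
Proof.
  intros Hm; pose proof (ellK_pos m ltac:(lra)); pose proof (phi_den_neg m Hm).
  pose proof (is_derive_ellE m Hm) as HE; pose proof (is_derive_ellK m Hm) as HK.
  unfold phi_ell, phi_den in *; auto_derive.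
  - repeat split; try lra; eexists; eassumption.
  - rewrite (is_derive_unique (fun y : R => ellE y) _ _ HE).
    rewrite (is_derive_unique (fun y : R => ellK y) _ _ HK).
    unfold num_quad, ratio; field; repeat split; lra.
Qed.

Lemma phi_ell_derive_neg m : 0 < m < 1 ->
  ellK m ^ 4 * num_quad m (1 - ratio m) / (2 * phi_den m ^ 2) < 0.
Proof.
  intros Hm; pose proof (num_quad_ratio_neg m Hm).
  pose proof (pow_lt (ellK m) 4 (ellK_pos m ltac:(lra))).
  pose proof (pow2_gt_0 _ (Rlt_not_eq _ _ (phi_den_neg m Hm))).
  apply Rdiv_neg_pos; nra.
Qed.

Lemma is_derive_phi x : 0 < x < 1 ->
  is_derive phi x (ellK x ^ 4 * num_quad x (1 - ratio x) / (2 * phi_den x ^ 2)).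
Proof.
  intros Hx; apply (is_derive_ext_loc (V := R_NormedModule) phi_ell phi).
  - exists (mkposreal x (proj1 Hx)); intros y Hy; simpl in Hy.
    unfold ball in Hy; simpl in Hy; unfold AbsRing_ball, abs, minus, plus, opp in Hy; simpl in Hy.
    apply Rabs_lt_between in Hy; symmetry; apply phi_eq_phi_ell; lra.
  - apply is_derive_phi_ell, Hx.
Qed.

Lemma continuity_pt_phi x : 0 < x < 1 -> continuity_pt phi x.
Proof.
  intros Hx; apply continuity_pt_filterlim, (ex_derive_continuous (V := R_NormedModule)).
  eexists; apply is_derive_phi, Hx.
Qed.

Lemma phi_decreasing x y : 0 < x -> x < y -> y < 1 -> phi y < phi x.
Proof.
  intros Hx Hxy Hy.
  destruct (MVT_gen phi x y
              (fun z => ellK z ^ 4 * num_quad z (1 - ratio z) / (2 * phi_den z ^ 2)))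
    as [c [Hc Hmvt]]; rewrite Rmin_left, Rmax_right in * by lra.
  - intros z Hz; apply is_derive_phi; lra.
  - intros z Hz; apply continuity_pt_phi; lra.
  - pose proof (phi_ell_derive_neg c ltac:(lra)); nra.
Qed.

(** * The limit of [phi] at [0] *)

Lemma phi_ell_ratio m : 0 < m < 1 ->
  phi_ell m = / 2 * ln (1 - m) + 2 * m * (ratio m - 1) / den_quad m (ratio m).
Proof.
  intros Hm; pose proof (phi_den_neg m Hm); pose proof (den_quad_ratio_neg m Hm).
  pose proof (ellK_pos m ltac:(lra)).
  unfold phi_ell; rewrite phi_den_eq by lra; unfold ratio in *; f_equal; field.
  repeat split; lra.
Qed.

Lemma ratio_near_up_poly m : 0 < m < 1 -> up_poly m - m ^ 3 / 2 <= ratio m <= up_poly m.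
Proof.
  intros Hm; pose proof (ratio_gt_low_poly m Hm); pose proof (ratio_lt_up_poly m Hm).
  destruct (sqrt_one_sub_bounds m Hm) as [Hq Hq2].
  pose proof (low_poly_near_up_poly _ Hq); rewrite Hq2 in *.
  replace (1 - (1 - m)) with m in * by ring.
  set (q := sqrt (1 - m)) in *.
  assert ((1 - q) ^ 3 <= m ^ 3) by (apply pow_incr; split; nra).
  lra.
Qed.

(* With [r = up_poly m + O(m^3)] one has [2 m (r - 1) = - m^2 + O(m^3)] and
   [den_quad m r = - 5 m^2 / 8 + O(m^3)]. *)
Lemma phi_frac_near_0 m r : 0 < m <= 1 / 10 -> up_poly m - m ^ 3 / 2 <= r <= up_poly m ->
  Rabs (2 * m * (r - 1) / den_quad m r - 8 / 5) <= 4 * m.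
Proof.
  intros Hm Hr.
  pose proof (pow_lt m 2 ltac:(lra)); pose proof (pow_lt m 3 ltac:(lra)).
  set (tau := (r - up_poly m) / m ^ 3).
  assert (Hrt : r = up_poly m + m ^ 3 * tau) by (unfold tau; field; lra).
  assert (Htau : -1/2 <= tau <= 0) by (unfold tau; split; apply Rmult_le_reg_r with (m ^ 3);
                                       unfold Rdiv; rewrite ?Rmult_assoc, ?Rinv_l; lra).
  clearbody tau; subst r; unfold up_poly, den_quad.
  set (d := -5/8 + m/8 + m^2/128 + 2 * m * tau - 2 * m^2 * tau - m^3 * tau / 4
            + 2 * m^4 * tau^2).
  set (n := -13/8 - m/16 - 16 * tau + 26 * m * tau + 2 * m ^ 2 * tau - 16 * m ^ 3 * tau ^ 2).
  assert (Hsmall : m ^ 2 <= 1/100 /\ m ^ 3 <= 1/1000 /\ 0 <= m ^ 4 <= 1/10000)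
    by (simpl; repeat split; nra).
  assert (Hd : d <= -3/5).
  { assert (- m / 2 <= m * tau <= 0) by (split; nra).
    assert (- m ^ 2 / 2 <= m ^ 2 * tau <= 0) by (split; nra).
    assert (- m ^ 3 / 2 <= m ^ 3 * tau <= 0) by (split; nra).
    assert (0 <= m ^ 4 * tau ^ 2 <= 1/40000) by (split; nra).
    unfold d; nra. }
  assert (Hn : -12 <= n <= 12).
  { assert (0 <= m ^ 3 * tau ^ 2 <= 1/4000) by (split; nra).
    unfold n; split; nra. }
  replace (2 * (1 - m / 2 - m ^ 2 / 16 + m ^ 3 * tau) ^ 2
           - 2 * (1 - m / 2 - m ^ 2 / 16 + m ^ 3 * tau) + m * (1 - m))
    with (m ^ 2 * d) by (unfold d; field).
  replace (2 * m * (1 - m / 2 - m ^ 2 / 16 + m ^ 3 * tau - 1) / (m ^ 2 * d) - 8 / 5)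
    with (m * n / (5 * d)) by (unfold n, d in *; field; repeat split; lra).
  rewrite Rabs_div by lra; rewrite (Rabs_left (5 * d)) by lra.
  apply Rmult_le_reg_r with (- (5 * d)); [lra |].
  unfold Rdiv; rewrite Rmult_assoc, Rinv_l by lra.
  rewrite Rabs_mult, Rabs_pos_eq by lra.
  assert (Rabs n <= 12) by (apply Rabs_le; lra); nra.
Qed.

Lemma phi_converges_at_0 : converges_at_0 phi (8 / 5).
Proof.
  intros eps Heps; exists (Rmin (1 / 10) (eps / 6)); split; [apply Rmin_pos; lra |].
  intros x Hx; pose proof (Rmin_l (1 / 10) (eps / 6)); pose proof (Rmin_r (1 / 10) (eps / 6)).
  rewrite phi_eq_phi_ell, phi_ell_ratio by lra.
  pose proof (phi_frac_near_0 x (ratio x) ltac:(lra) (ratio_near_up_poly x ltac:(lra)))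
    as Hfrac.
  pose proof (ln_one_sub_bounds x ltac:(lra)).
  apply Rabs_le_between in Hfrac; apply Rabs_lt_between; lra.
Qed.

(** * The limit of [phi] at [1] *)

Lemma sin_cos_quarter t : 0 <= t <= PI / 2 ->
  0 <= cos t /\ 0 <= sin t <= 1 /\ cos t ^ 2 + sin t ^ 2 = 1.
Proof.
  intros Ht; pose proof PI_RGT_0; pose proof (sin2_cos2 t); unfold Rsqr in *.
  repeat split; [apply cos_ge_0 | apply sin_ge_0 | apply SIN_bound | simpl]; lra.
Qed.

Lemma is_RInt_cos : is_RInt cos 0 (PI / 2) 1.
Proof.
  pose proof (is_RInt_antiderivative sin cos 0 (PI / 2)) as H.
  rewrite sin_PI2, sin_0, Rminus_0_r in H; apply H; [pose proof PI2_pos; lra | |].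
  - intros t _; auto_derive; auto; ring.
  - intros t _; apply continuous_cos.
Qed.

Lemma is_RInt_cos_div_one_add_sin : is_RInt (fun t => cos t / (1 + sin t)) 0 (PI / 2) (ln 2).
Proof.
  replace (ln 2) with (ln (1 + sin (PI / 2)) - ln (1 + sin 0))
    by (rewrite sin_PI2, sin_0, Rplus_0_r, ln_1, Rminus_0_r; f_equal; ring).
  apply (is_RInt_antiderivative (fun t => ln (1 + sin t))); [pose proof PI2_pos; lra | |];
    intros t Ht; destruct (sin_cos_quarter t Ht) as [Hc [Hs Hcs]].
  - auto_derive; [lra | field; lra].
  - apply (ex_derive_continuous (V := R_NormedModule)); auto_derive; lra.
Qed.

Lemma is_RInt_sin_div_sqrt_radicand a : 0 < a < 1 ->
  is_RInt (fun t => sin t / sqrt (1 - a ^ 2 * sin t ^ 2)) 0 (PI / 2)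
    ((ln (1 + a) - ln (1 - a ^ 2) / 2) / a).
Proof.
  intros Ha; set (F := fun t => - ln (a * cos t + sqrt (1 - a ^ 2 * sin t ^ 2)) / a).
  replace ((ln (1 + a) - ln (1 - a ^ 2) / 2) / a) with (F (PI / 2) - F 0).
  2: { unfold F; rewrite cos_PI2, sin_PI2, cos_0, sin_0.
       replace (1 - a ^ 2 * 1 ^ 2) with (1 - a ^ 2) by ring.
       replace (1 - a ^ 2 * 0 ^ 2) with 1 by ring.
       rewrite sqrt_1, Rmult_0_r, Rplus_0_l, Rmult_1_r, (Rplus_comm a 1), ln_sqrt by nra.
       field; lra. }
  apply is_RInt_antiderivative; [pose proof PI2_pos; lra | |];
    intros t Ht; destruct (sin_cos_quarter t Ht) as [Hc [Hs Hcs]];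
    pose proof (radicand_pos (a ^ 2) t ltac:(nra)) as Hpos;
    pose proof (sqrt_lt_R0 _ Hpos).
  - pose proof (sqrt_sqrt _ (Rlt_le _ _ Hpos)).
    unfold F; auto_derive;
      replace (1 + - (a * (a * 1) * (sin t * (sin t * 1)))) with (1 - a ^ 2 * sin t ^ 2) by ring;
      [repeat split; nra |].
    field; repeat split; nra.
  - apply (ex_derive_continuous (V := R_NormedModule)); auto_derive.
    replace (1 + - (a * (a * 1) * (sin t * (sin t * 1)))) with (1 - a ^ 2 * sin t ^ 2) by ring.
    repeat split; lra.
Qed.

Lemma is_RInt_cos_div_radicand a : 0 < a < 1 ->
  is_RInt (fun t => cos t / (1 - a ^ 2 * sin t ^ 2)) 0 (PI / 2)
    ((ln (1 + a) - ln (1 - a)) / (2 * a)).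
Proof.
  intros Ha; set (F := fun t => (ln (1 + a * sin t) - ln (1 - a * sin t)) / (2 * a)).
  replace ((ln (1 + a) - ln (1 - a)) / (2 * a)) with (F (PI / 2) - F 0).
  2: { unfold F; rewrite sin_PI2, sin_0, Rmult_1_r, Rmult_0_r, Rplus_0_r, Rminus_0_r, ln_1.
       field; lra. }
  apply is_RInt_antiderivative; [pose proof PI2_pos; lra | |];
    intros t Ht; destruct (sin_cos_quarter t Ht) as [Hc [Hs Hcs]];
    assert (0 <= a * sin t < 1) by (split; nra).
  - unfold F; auto_derive; [repeat split; lra |].
    field; repeat split; try lra; nra.
  - apply (ex_derive_continuous (V := R_NormedModule)); auto_derive; nra.
Qed.

Lemma sqrt_radicand_ge_cos a t : 0 < a < 1 -> 0 <= t <= PI / 2 ->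
  cos t <= sqrt (1 - a ^ 2 * sin t ^ 2).
Proof.
  intros Ha Ht; destruct (sin_cos_quarter t Ht) as [Hc [Hs Hcs]].
  rewrite <- (sqrt_pow2 (cos t)) by exact Hc; apply sqrt_le_1_alt.
  assert (a ^ 2 <= 1) by nra; nra.
Qed.

(* Since [cos t <= sqrt (1 - a^2 sin^2 t)], the integrand [(1 - sin t)/sqrt (1 - a^2 sin^2 t)]
   of [K(a^2) - ellK_log_part a] is close to [(1 - sin t)/cos t = cos t/(1 + sin t)] when
   [a] is close to 1. *)
Lemma radicand_sandwich a t : 0 < a < 1 -> 0 <= t <= PI / 2 ->
  cos t / (1 + sin t) - (1 - a ^ 2) * (cos t / (1 - a ^ 2 * sin t ^ 2))
  <= / sqrt (1 - a ^ 2 * sin t ^ 2) - sin t / sqrt (1 - a ^ 2 * sin t ^ 2)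
  <= cos t / (1 + sin t).
Proof.
  intros Ha Ht; destruct (sin_cos_quarter t Ht) as [Hc [Hs Hcs]].
  pose proof (sqrt_radicand_ge_cos a t Ha Ht) as HcD.
  pose proof (radicand_pos (a ^ 2) t ltac:(nra)) as Hpos.
  pose proof (sqrt_lt_R0 _ Hpos); pose proof (sqrt_sqrt _ (Rlt_le _ _ Hpos)) as HD2.
  set (D := sqrt (1 - a ^ 2 * sin t ^ 2)) in *; rewrite <- HD2; split.
  - replace (/ D - sin t / D)
      with ((1 - sin t) * (1 + sin t) * D * / ((1 + sin t) * (D * D))) by (field; lra).
    replace (cos t / (1 + sin t) - (1 - a ^ 2) * (cos t / (D * D)))
      with ((cos t * (D * D) - (1 - a ^ 2) * cos t * (1 + sin t)) * / ((1 + sin t) * (D * D)))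
      by (field; lra).
    apply Rmult_le_compat_r; [left; apply Rinv_0_lt_compat; nra |].
    assert (Hys : (1 - a ^ 2) * sin t ^ 2 <= (1 - a ^ 2) * (1 + sin t))
      by (apply Rmult_le_compat_l; nra).
    assert (D * D - cos t * D - (1 - a ^ 2) * (1 + sin t) <= 0) by (simpl in *; nra).
    nra.
  - replace (/ D - sin t / D) with ((1 - sin t) * (1 + sin t) * / ((1 + sin t) * D))
      by (field; lra).
    replace (cos t / (1 + sin t)) with (cos t * D * / ((1 + sin t) * D)) by (field; lra).
    apply Rmult_le_compat_r; [left; apply Rinv_0_lt_compat; nra | simpl in *; nra].
Qed.

Definition ellK_log_part a := (ln (1 + a) - ln (1 - a ^ 2) / 2) / a.

Lemma ellK_sandwich a : 0 < a < 1 ->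
  ellK_log_part a + ln 2 - (1 - a ^ 2) * ((ln (1 + a) - ln (1 - a)) / (2 * a)) <= ellK (a ^ 2)
  <= ellK_log_part a + ln 2.
Proof.
  intros Ha.
  pose proof (is_RInt_sin_div_sqrt_radicand a Ha) as HJ.
  pose proof is_RInt_cos_div_one_add_sin as HL.
  pose proof (is_RInt_cos_div_radicand a Ha) as HR.
  set (f := fun t => / sqrt (1 - a ^ 2 * sin t ^ 2) - sin t / sqrt (1 - a ^ 2 * sin t ^ 2)).
  assert (Hf : ex_RInt f 0 (PI / 2)).
  { apply (ex_RInt_minus (V := R_NormedModule)); [apply ex_RInt_ellK; nra | eexists; exact HJ]. }
  assert (HK : ellK (a ^ 2) = ellK_log_part a + RInt f 0 (PI / 2)).
  { unfold ellK_log_part; rewrite <- (is_RInt_unique _ _ _ _ HJ).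
    rewrite (RInt_ext f (fun t => 1 * (/ sqrt (1 - a ^ 2 * sin t ^ 2))
                                 + -1 * (sin t / sqrt (1 - a ^ 2 * sin t ^ 2))))
      by (intros t _; unfold f; real_eq; ring).
    rewrite RInt_lincomb; [unfold ellK; lra | apply ex_RInt_ellK; nra | eexists; exact HJ]. }
  rewrite HK; split.
  - rewrite <- (is_RInt_unique _ _ _ _ HL), <- (is_RInt_unique _ _ _ _ HR).
    replace (ellK_log_part a + RInt (fun t => cos t / (1 + sin t)) 0 (PI / 2)
             - (1 - a ^ 2) * RInt (fun t => cos t / (1 - a ^ 2 * sin t ^ 2)) 0 (PI / 2))
      with (ellK_log_part a + RInt (fun t => 1 * (cos t / (1 + sin t))
                          + - (1 - a ^ 2) * (cos t / (1 - a ^ 2 * sin t ^ 2))) 0 (PI / 2))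
      by (rewrite RInt_lincomb by (eexists; eassumption); ring).
    apply Rplus_le_compat_l, RInt_le; [pose proof PI2_pos; lra | | exact Hf |].
    + apply (ex_RInt_plus (V := R_NormedModule));
        apply (ex_RInt_scal (V := R_NormedModule)); eexists; eassumption.
    + intros t Ht; pose proof (radicand_sandwich a t Ha ltac:(lra)); unfold f; lra.
  - rewrite <- (is_RInt_unique _ _ _ _ HL).
    apply Rplus_le_compat_l, RInt_le; [pose proof PI2_pos; lra | exact Hf | eexists; exact HL |].
    intros t Ht; apply (radicand_sandwich a t Ha); lra.
Qed.

Lemma ellK_near_1 a : 1 / 2 <= a < 1 ->
  Rabs (ellK (a ^ 2) - - ln (1 - a ^ 2) / 2 - 2 * ln 2)
  <= 3 * (1 - a ^ 2) + (1 - a ^ 2) * - ln (1 - a ^ 2).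
Proof.
  intros Ha; pose proof (ellK_sandwich a ltac:(lra)) as [Hlo Hup]; unfold ellK_log_part in *.
  set (y := 1 - a ^ 2) in *; set (L := - ln y); set (l := ln (1 + a)) in *.
  assert (Hy : 0 < y <= 1) by (unfold y; split; nra).
  assert (HL : 0 <= L) by (unfold L; pose proof (ln_le_sub_1 y ltac:(lra)); lra).
  assert (Hl1a : ln (1 - a) = - L - l).
  { unfold L, l; replace y with ((1 - a) * (1 + a)) by (unfold y; ring).
    rewrite ln_mult by lra; ring. }
  rewrite Hl1a in Hlo.
  assert (Hl : 0 <= l <= ln 2).
  { unfold l; rewrite <- ln_1; split; apply ln_le; lra. }
  assert (Hl2 : ln 2 - l <= y).
  { unfold l; replace (ln 2 - ln (1 + a)) with (ln (2 / (1 + a)))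
      by (unfold Rdiv; rewrite ln_mult, ln_Rinv by (try apply Rinv_0_lt_compat; lra); ring).
    pose proof (ln_le_sub_1 (2 / (1 + a)) ltac:(apply Rdiv_lt_0_compat; lra)).
    assert (2 / (1 + a) - 1 <= y); [| lra].
    apply Rmult_le_reg_r with (1 + a); [lra |].
    replace ((2 / (1 + a) - 1) * (1 + a)) with (1 - a) by (field; lra); unfold y; nra. }
  set (u := / a).
  assert (Hu : 1 <= u <= 2 /\ u - 1 <= 2 * y).
  { unfold u, y; split; [split |].
    - rewrite <- Rinv_1; apply Rinv_le_contravar; lra.
    - replace 2 with (/ (1 / 2)) by field; apply Rinv_le_contravar; lra.
    - apply Rmult_le_reg_r with a; [lra |].
      replace ((/ a - 1) * a) with (1 - a) by (field; lra); nra. }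
  replace ((l - ln y / 2) / a) with ((l + L / 2) * u) in * by (unfold u, L; field; lra).
  replace ((l - (- L - l)) / (2 * a)) with ((2 * l + L) * u / 2) in Hlo
    by (unfold u; field; lra).
  pose proof ln2_le_1.
  assert ((l + L / 2) * (u - 1) <= (1 + L / 2) * (2 * y)) by (apply Rmult_le_compat; lra).
  assert (0 <= (l + L / 2) * (u - 1)) by (apply Rmult_le_pos; lra).
  assert (y * ((2 * l + L) * u / 2) <= y * (2 + L)).
  { apply Rmult_le_compat_l; [lra |].
    assert ((2 * l + L) * u <= (2 + L) * 2) by (apply Rmult_le_compat; lra); lra. }
  apply Rabs_le_between; split; nra.
Qed.

Lemma ellE_near_1 x : 0 < x < 1 -> 1 <= ellE x <= 1 + 2 * sqrt (1 - x).
Proof.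
  intros Hx; set (a := sqrt x).
  assert (Ha : 0 < a < 1).
  { unfold a; split; [apply sqrt_lt_R0; lra | rewrite <- sqrt_1; apply sqrt_lt_1_alt; lra]. }
  replace x with (a ^ 2) in * by (apply pow2_sqrt; lra).
  pose proof (sqrt_lt_R0 (1 - a ^ 2) ltac:(nra)) as Hb.
  pose proof (sqrt_sqrt (1 - a ^ 2) ltac:(nra)) as Hb2.
  set (b := sqrt (1 - a ^ 2)) in *.
  assert (Hc : is_RInt (fun t => 1 * cos t + b * 1) 0 (PI / 2) (1 * 1 + b * (PI / 2))).
  { apply (is_RInt_plus (V := R_NormedModule) (fun t => 1 * cos t) (fun t => b * 1));
      apply (is_RInt_scal (V := R_NormedModule)); [apply is_RInt_cos |].
    replace (PI / 2) with ((PI / 2 - 0) * 1) at 2 by ring.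
    apply (is_RInt_const (V := R_NormedModule)). }
  split.
  - rewrite <- (is_RInt_unique _ _ _ _ is_RInt_cos); unfold ellE.
    apply RInt_le;
      [pose proof PI2_pos; lra | eexists; apply is_RInt_cos | apply ex_RInt_ellE; nra |].
    intros t Ht; apply sqrt_radicand_ge_cos; lra.
  - assert (PI / 2 * b <= 2 * b) by (pose proof PI_4; nra).
    apply Rle_trans with (1 * 1 + b * (PI / 2)); [| lra].
    rewrite <- (is_RInt_unique _ _ _ _ Hc); unfold ellE.
    apply RInt_le; [pose proof PI2_pos; lra | apply ex_RInt_ellE; nra | eexists; apply Hc |].
    intros t Ht; destruct (sin_cos_quarter t ltac:(lra)) as [Hc0 [Hs Hcs]].
    pose proof (radicand_pos (a ^ 2) t ltac:(nra)) as Hpos.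
    pose proof (sqrt_lt_R0 _ Hpos); pose proof (sqrt_sqrt _ (Rlt_le _ _ Hpos)) as HD2.
    set (D := sqrt (1 - a ^ 2 * sin t ^ 2)) in *.
    assert (D * D <= (cos t + b) * (cos t + b)).
    { rewrite HD2; assert (a ^ 2 * sin t ^ 2 <= sin t ^ 2) by (assert (a ^ 2 <= 1) by nra; nra).
      assert (0 <= cos t * b) by nra; simpl in Hcs; nra. }
    nra.
Qed.

(* Writing the numerator through [B = 2 (E - m) (K - E) - m (1 - m) K^2], the fraction equals
   [K + K B / D], and [|D| >= K] while [B] is small when [E] is near [1] and [m] near [1]. *)
Lemma phi_frac_near_1 K E m b :
  0 < m < 1 -> 0 < b <= 1 -> b * b = 1 - m -> 1 <= E <= 1 + 2 * b -> E <= K -> 3 <= K ->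
  (1 - m) * K ^ 2 + 4 * b <= 1 ->
  Rabs (2 * m * K * (E - K) / (2 * E ^ 2 - 2 * E * K + m * (1 - m) * K ^ 2) - K)
  <= 6 * b * K + (1 - m) * K ^ 2.
Proof.
  intros Hm Hb Hbm HE HEK HK Hsmall.
  set (D := 2 * E ^ 2 - 2 * E * K + m * (1 - m) * K ^ 2).
  set (B := 2 * (E - m) * (K - E) - m * (1 - m) * K ^ 2).
  assert (HK2 : 0 <= (1 - m) * K ^ 2) by (apply Rmult_le_pos; [lra | apply pow2_ge_0]).
  assert (HD : D <= - K).
  { assert (2 * E ^ 2 - 2 * E * K <= - 2 * (K - E)) by (simpl; nra).
    assert (m * (1 - m) * K ^ 2 <= (1 - m) * K ^ 2) by (rewrite Rmult_assoc; nra).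
    unfold D; lra. }
  replace (2 * m * K * (E - K) / D - K) with (K * B / D) by (unfold B, D in *; field; lra).
  assert (HB : Rabs B <= 6 * b * K + (1 - m) * K ^ 2).
  { assert (0 <= (E - m) * (K - E) <= 3 * b * K).
    { split; [apply Rmult_le_pos; lra |].
      apply Rle_trans with (3 * b * K); [apply Rmult_le_compat; nra | lra]. }
    assert (0 <= m * (1 - m) * K ^ 2 <= (1 - m) * K ^ 2) by (split; rewrite Rmult_assoc; nra).
    unfold B; apply Rabs_le_between; split; lra. }
  apply Rle_trans with (Rabs B); [| exact HB].
  rewrite Rabs_div, Rabs_mult, (Rabs_left D), (Rabs_pos_eq K) by lra.
  apply Rmult_le_reg_r with (- D); [lra |].
  unfold Rdiv; rewrite Rmult_assoc, Rinv_l by lra.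
  pose proof (Rabs_pos B); nra.
Qed.

Lemma ln_pow4_bounds v : 0 < v <= exp (-2) -> 8 <= - ln (v ^ 4) /\ v * - ln (v ^ 4) <= 4.
Proof.
  intros Hv; rewrite ln_pow by lra; simpl INR; split.
  - assert (ln v <= -2) by (rewrite <- (ln_exp (-2)); apply ln_le; lra); lra.
  - pose proof (ln_le_sub_1 (/ v) ltac:(apply Rinv_0_lt_compat; lra)) as Hln.
    rewrite ln_Rinv in Hln by lra.
    apply Rmult_le_compat_l with (r := v) in Hln; [| lra].
    replace (v * (/ v - 1)) with (1 - v) in Hln by (field; lra); nra.
Qed.

Lemma sqrt_bounds_half x : 1 / 4 <= x < 1 -> 1 / 2 <= sqrt x < 1.
Proof.
  intros Hx; split.
  - rewrite <- (sqrt_pow2 (1 / 2)) by lra; apply sqrt_le_1_alt; nra.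
  - rewrite <- sqrt_1; apply sqrt_lt_1_alt; lra.
Qed.

Lemma phi_near_1_bound v x : 0 < v <= 1 / 100 -> v <= exp (-2) -> 1 - x = v ^ 4 ->
  Rabs (phi x - ln 4) <= 80 * v.
Proof.
  intros Hv Hv2 Hx; pose proof (pow_lt v 4 ltac:(lra)).
  assert (Hv2' : v ^ 2 <= v) by nra.
  assert (Hv3 : v ^ 3 <= v ^ 2) by (replace (v ^ 3) with (v * v ^ 2) by ring; nra).
  assert (Hv4 : v ^ 4 <= v ^ 3) by (replace (v ^ 4) with (v * v ^ 3) by ring; nra).
  assert (Hx1 : 1 / 2 <= x < 1) by lra.
  destruct (ln_pow4_bounds v ltac:(lra)) as [HL8 HvL]; rewrite <- Hx in HL8, HvL.
  set (y := 1 - x) in *; set (L := - ln y) in *.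
  pose proof (ellK_near_1 (sqrt x) (sqrt_bounds_half x ltac:(lra))) as HK.
  rewrite pow2_sqrt in HK by lra; fold y L in HK; apply Rabs_le_between in HK.
  pose proof (ellE_near_1 x ltac:(lra)) as HE; fold y in HE.
  replace (sqrt y) with (v ^ 2) in HE
    by (rewrite Hx; replace (v ^ 4) with ((v ^ 2) ^ 2) by ring; rewrite sqrt_pow2; nra).
  pose proof (ellE_le_ellK x ltac:(lra)) as HEK.
  set (K := ellK x) in *; set (E := ellE x) in *.
  assert (HyL : y * L <= v ^ 3 * 4).
  { rewrite Hx; replace (v ^ 4 * L) with (v ^ 3 * (v * L)) by ring.
    apply Rmult_le_compat_l; [apply pow_le |]; lra. }
  pose proof ln2_le_1; pose proof ln_lt_2.
  assert (HK3 : 3 <= K <= L / 2 + 3) by lra.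
  assert (HvK : 0 < v * K <= 3).
  { split; [apply Rmult_lt_0_compat; lra |].
    assert (v * K <= v * (L / 2 + 3)) by (apply Rmult_le_compat_l; lra); lra. }
  assert (HyK : y * K ^ 2 <= v ^ 2 * 9).
  { rewrite Hx; replace (v ^ 4 * K ^ 2) with (v ^ 2 * (v * K) ^ 2) by ring.
    apply Rmult_le_compat_l; [apply pow2_ge_0 | nra]. }
  assert (v ^ 2 * K <= v * 3)
    by (replace (v ^ 2 * K) with (v * (v * K)) by ring; apply Rmult_le_compat_l; lra).
  pose proof (phi_frac_near_1 K E x (v ^ 2) ltac:(lra) ltac:(nra)
                ltac:(fold y; rewrite Hx; ring) HE HEK ltac:(lra) ltac:(fold y; lra)) as Hterm.
  fold y in Hterm; apply Rabs_le_between in Hterm.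
  rewrite phi_eq_phi_ell by lra; unfold phi_ell, phi_den; fold K E y.
  replace (ln 4) with (2 * ln 2) by (replace 4 with (2 * 2) by ring; rewrite ln_mult by lra; ring).
  replace (ln y) with (- L) by (unfold L; ring).
  apply Rabs_le_between; split; lra.
Qed.

Lemma phi_converges_at_1 : converges_at_1 phi (ln 4).
Proof.
  intros eps Heps; set (v0 := Rmin (1 / 100) (Rmin (eps / 100) (exp (-2)))).
  assert (Hv0 : 0 < v0 <= 1 / 100 /\ v0 <= eps / 100 /\ v0 <= exp (-2)).
  { pose proof (exp_pos (-2)); unfold v0.
    pose proof (Rmin_l (1 / 100) (Rmin (eps / 100) (exp (-2)))).
    pose proof (Rmin_r (1 / 100) (Rmin (eps / 100) (exp (-2)))).
    pose proof (Rmin_l (eps / 100) (exp (-2))); pose proof (Rmin_r (eps / 100) (exp (-2))).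
    repeat split; try lra; apply Rmin_pos; [lra | apply Rmin_pos; lra]. }
  exists (v0 ^ 4); split; [apply pow_lt; lra |]; intros x Hx.
  set (v := sqrt (sqrt (1 - x))).
  assert (Hv4 : v ^ 4 = 1 - x).
  { unfold v; replace 4%nat with (2 * 2)%nat by reflexivity; rewrite pow_mult.
    rewrite !pow2_sqrt; [lra | lra | apply sqrt_pos]. }
  assert (Hv : 0 < v < v0).
  { split; [apply sqrt_lt_R0, sqrt_lt_R0; lra |].
    destruct (Rlt_or_le v v0) as [| Hle]; [assumption |].
    assert (v0 ^ 4 <= v ^ 4) by (apply pow_incr; lra); lra. }
  pose proof (phi_near_1_bound v x ltac:(lra) ltac:(lra) (eq_sym Hv4)); lra.
Qed.

Lemma elliptic_bounds_of_phi_bounds x : 0 < x < 1 -> ln 4 < phi x < 8 / 5 ->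
  2 * x * Kx x * (Kx x - Ex x) / (8 / 5 - / 2 * ln (1 - x))
    <= 2 * Ex x * Kx x - 2 * Ex x ^ 2 - x * (1 - x) * Kx x ^ 2
  /\ 2 * Ex x * Kx x - 2 * Ex x ^ 2 - x * (1 - x) * Kx x ^ 2
    <= 2 * x * Kx x * (Kx x - Ex x) / (ln 4 - / 2 * ln (1 - x)).
Proof.
  intros Hx Hphi; pose proof (phi_den_neg x Hx) as Hden.
  unfold phi in Hphi; unfold phi_den in Hden; rewrite Kx_ellK, Ex_ellE in * by lra.
  assert (Hln : / 2 * ln (1 - x) < ln 4).
  { assert (ln (1 - x) < 0) by (rewrite <- ln_1; apply ln_increasing; lra).
    assert (0 < ln 4) by (rewrite <- ln_1; apply ln_increasing; lra); lra. }
  apply div_bounds_of_shifted_ratio; [lra | exact Hln |].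
  replace (2 * x * ellK x * (ellK x - ellE x)
           / (2 * ellE x * ellK x - 2 * ellE x ^ 2 - x * (1 - x) * ellK x ^ 2))
    with (2 * x * ellK x * (ellE x - ellK x)
          / (2 * ellE x ^ 2 - 2 * ellE x * ellK x + x * (1 - x) * ellK x ^ 2))
    by (field; lra).
  exact Hphi.
Qed.

Theorem mainTheorem10 :
  (forall x y : R, 0 < x -> x < y -> y < 1 -> phi y < phi x) /\
  (forall z : R, (exists x : R, 0 < x < 1 /\ phi x = z) <-> ln 4 < z < 8 / 5) /\
  (forall x : R, 0 < x < 1 ->
     2 * x * Kx x * (Kx x - Ex x) / (8 / 5 - / 2 * ln (1 - x))
       <= 2 * Ex x * Kx x - 2 * Ex x ^ 2 - x * (1 - x) * Kx x ^ 2
     /\ 2 * Ex x * Kx x - 2 * Ex x ^ 2 - x * (1 - x) * Kx x ^ 2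
       <= 2 * x * Kx x * (Kx x - Ex x) / (ln 4 - / 2 * ln (1 - x))).
Proof.
  pose proof (lt_of_decreasing_converges_at_0 phi _ phi_decreasing phi_converges_at_0) as Hhi.
  pose proof (gt_of_decreasing_converges_at_1 phi _ phi_decreasing phi_converges_at_1) as Hlo.
  split; [exact phi_decreasing | split].
  - intros z; split.
    + intros [x [Hx <-]]; split; [apply Hlo | apply Hhi]; exact Hx.
    + apply surjective_of_converges;
        [exact continuity_pt_phi | exact phi_converges_at_0 | exact phi_converges_at_1].
  - intros x Hx; apply elliptic_bounds_of_phi_bounds; [exact Hx |].
    split; [apply Hlo | apply Hhi]; exact Hx.
Qed.
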